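(* Let $\mathcal{K}\subseteq\mathbb{R}^m$ be a closed convex cone with dual cone $\mathcal{K}^*$, and let $f$ be a $\nu$-logarithmically-homogeneous self-concordant barrier (LHSCB) for $\mathcal{K}$. Let $(x^*,s^*,z^* )$ be a solution of a given (previous) optimization problem, let $\mu^0>0$ and $\lambda>0$. Define $c:=s^*-\lambda z^*$, $$s^0:=S_{\mathcal{K},\mu^0}(c)=\arg\min_{s\in\operatorname{int}\mathcal{K}}\ \tfrac12\|s-c\|_2^2+\mu^0 f(s),\qquad z^0:=\frac{s^0-(s^*-\lambda z^* )}{\lambda},\qquad x^0:=x^*.$$ Then $(s^0,z^0)\in\operatorname{int}\mathcal{K}\times\operatorname{int}\mathcal{K}^*$. Moreover, the point $(x^0,s^0,z^0)$ lies on the central path parametrized by $$R(x,s,z)=\mu r^0,\qquad z=-\mu\nabla f(s),$$ where $r^0=\frac{\lambda}{\mu^0}R(x^0,s^0,z^0)$, and $\langle s^0,z^0\rangle=\frac{\nu\mu^0}{\lambda}$; i.e. $(s^0,z^0)$ is on this central path with parameter $\mu=\mu^0/\lambda$.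
   Context: Consider the conic problem $\min_{x,s}\frac12 x^\top Px+q^\top x$ s.t. $Ax+s=b$, $s\in\mathcal{K}$, with $P\in\mathbb{R}^{n\times n}$ symmetric positive semidefinite, $A\in\mathbb{R}^{m\times n}$, $q\in\mathbb{R}^n$, $b\in\mathbb{R}^m$. The residual map is $$R(x,s,z)=\begin{bmatrix}r_d\\ r_p\end{bmatrix}:=\begin{bmatrix}P & A^\top\\ -A & 0\end{bmatrix}\begin{bmatrix}x\\ z\end{bmatrix}+\begin{bmatrix}q\\ b\end{bmatrix}-\begin{bmatrix}0\\ s\end{bmatrix}.$$ A function $f:\operatorname{int}\mathcal{K}\to\mathbb{R}$ is self-concordant if $f(s)\to+\infty$ along any sequence in $\operatorname{int}\mathcal{K}$ converging to a boundary point of $\mathcal{K}$ and $|\nabla^3 f(s)[r,r,r]|\le 2(\nabla^2 f(s)[r,r])^{3/2}$ for all $s\in\operatorname{int}\mathcal{K}$, $r\in\mathbb{R}^m$; it is a $\nu$-LHSCB (of degree $\nu>0$) if moreover $f(\tau s)=f(s)-\nu\log\tau$ for all $s\in\operatorname{int}\mathcal{K}$, $\tau>0$.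
   Formalization: The cone 𝒦 is moreover pointed, 𝒦 ∩ (−𝒦) = {0}, so the result covers closed convex pointed cones only. The paper assumes this as well. *)

From HB Require Import structures.
From mathcomp Require Import all_boot all_order all_algebra.
From mathcomp Require Import all_classical all_reals all_analysis.
Set Implicit Arguments. Unset Strict Implicit. Unset Printing Implicit Defensive.
Import Order.TTheory GRing.Theory Num.Theory.
Import numFieldNormedType.Exports.
Local Open Scope classical_set_scope.
Local Open Scope ring_scope.

Section Defs.
Variable R : realType.

Definition dot (m : nat) (u v : 'cV[R]_m) : R := \sum_(i < m) u i 0 * v i 0.

Definition closed_convex_cone (m : nat) (K : set 'cV[R]_m) : Prop :=
  [/\ closed K, K 0,
      (forall x y, K x -> K y -> K (x + y)) &
      (forall (t : R) x, 0 <= t -> K x -> K (t *: x))].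

Definition pointed_cone (m : nat) (K : set 'cV[R]_m) : Prop :=
  forall x, K x -> K (- x) -> x = 0.

Definition dual_cone (m : nat) (K : set 'cV[R]_m) : set 'cV[R]_m :=
  [set z | forall s, K s -> 0 <= dot s z].

Definition unitv (m : nat) (i : 'I_m) : 'cV[R]_m := delta_mx i 0.

Definition grad (m : nat) (f : 'cV[R]_m -> R) (s : 'cV[R]_m) : 'cV[R]_m :=
  \col_i derive f s (unitv i).

Definition D2 (m : nat) (f : 'cV[R]_m -> R) (s r : 'cV[R]_m) : R :=
  derive (fun y => derive f y r) s r.
Definition D3 (m : nat) (f : 'cV[R]_m -> R) (s r : 'cV[R]_m) : R :=
  derive (fun y => derive (fun w => derive f w r) y r) s r.

Definition thrice_differentiable_on (m : nat) (K : set 'cV[R]_m)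
    (f : 'cV[R]_m -> R) : Prop :=
  forall s, interior K s ->
    [/\ differentiable f s,
        (forall r, differentiable (fun y => derive f y r) s) &
        (forall r r', differentiable
            (fun y => derive (fun w => derive f w r) y r') s)].

(* self-concordant function on int K (f only matters on int K) *)
Definition self_concordant (m : nat) (K : set 'cV[R]_m) (f : 'cV[R]_m -> R) : Prop :=
  [/\ thrice_differentiable_on K f,
      (forall (u : nat -> 'cV[R]_m) (sb : 'cV[R]_m),
          (forall k, interior K (u k)) -> u @ \oo --> sb ->
          K sb -> ~ interior K sb ->
          (fun k => f (u k)) @ \oo --> +oo) &
      (forall s r, interior K s ->
          0 <= D2 f s r /\ `|D3 f s r| <= 2 * (D2 f s r) `^ (3%:R / 2%:R))].

Definition LHSCB (m : nat) (K : set 'cV[R]_m) (f : 'cV[R]_m -> R) (nu : R) : Prop :=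
  [/\ 0 < nu, self_concordant K f &
      forall s (tau : R), interior K s -> 0 < tau ->
        f (tau *: s) = f s - nu * ln tau].

(* residual map R(x,s,z) = [P A^T; -A 0][x; z] + [q; b] - [0; s] *)
Definition resid (n m : nat) (P : 'M[R]_n) (A : 'M[R]_(m, n)) (q : 'cV[R]_n)
    (b : 'cV[R]_m) (x : 'cV[R]_n) (s z : 'cV[R]_m) : 'cV[R]_(n + m) :=
  col_mx (P *m x + A^T *m z + q) (- (A *m x) + b - s).

Definition prox_obj (m : nat) (f : 'cV[R]_m -> R) (mu : R) (c s : 'cV[R]_m) : R :=
  2%:R^-1 * dot (s - c) (s - c) + mu * f s.

End Defs.

From HB Require Import structures.
From mathcomp Require Import all_boot all_order all_algebra.
From mathcomp Require Import all_classical all_reals all_analysis.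
From mathcomp Require Import ring lra.
Import Order.TTheory GRing.Theory Num.Theory.
Import numFieldNormedType.Exports.
Local Open Scope classical_set_scope.
Local Open Scope ring_scope.
Set Implicit Arguments. Unset Strict Implicit.

(* Stationarity of [s0] for the proximal objective reads
   [s0 - c + mu0 grad f(s0) = 0], i.e. [z0 = - (mu0 / lambda) grad f(s0)]; the
   residual identity is then immediate, and Euler's identity
   [D f(s)[s] = - nu], obtained by differentiating the logarithmic homogeneity,
   gives [<s0, z0> = nu mu0 / lambda].
   The substance is that [- grad f(s)] lies in the interior of [K^*] whenever
   [s] lies in the interior of [K].  Convexity along rays and homogeneity give
   [D f(s)[d] <= 0] for [d] in [K].  If [D f(s)[d] = 0] for some nonzero [d],
   convexity makes [D f] and [D^2 f] vanish along the ray [s + t d], and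
   self-concordance (a Gronwall argument for [D^2 f]) then makes [f] constant
   on the segment from [s] back to the boundary of [K], which is reached
   because [K] is pointed; this contradicts the barrier property.  Compactness
   of the unit vectors of [K] turns [D f(s)[d] < 0] into
   [- D f(s)[d] >= eps |d|], which is interiority in [K^*]. *)

Section ClosedConvexCone.
Variables (R : realType) (m : nat) (K : set 'cV[R]_m).
Hypothesis Kc : closed_convex_cone K.

Lemma cone_closed : closed K.
Proof. by case: Kc. Qed.

Lemma coneD x y : K x -> K y -> K (x + y).
Proof. by case: Kc => _ _ + _; apply. Qed.

Lemma coneZ (t : R) x : 0 <= t -> K x -> K (t *: x).
Proof. by case: Kc => _ _ _; apply. Qed.

Lemma interior_normP y :
  interior K y <-> exists2 e : R, 0 < e & forall w, `|y - w| < e -> K w.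
Proof.
split; first by move=> /(@nbhs_normP R 'cV[R]_m y K)[e e0 he]; exists e => // w /he.
by move=> [e e0 he]; apply/(@nbhs_normP R 'cV[R]_m y K); exists e => // w /he.
Qed.

Lemma interior_coneZ (c : R) y : 0 < c -> interior K y -> interior K (c *: y).
Proof.
move=> c0 /interior_normP[e e0 he]; apply/interior_normP; exists (c * e).
  exact: mulr_gt0.
move=> w hw; rewrite -[w](scalerKV (lt0r_neq0 c0)); apply: coneZ; first exact: ltW.
apply: he; rewrite -[y](scalerK (lt0r_neq0 c0)) -scalerBr normrZ gtr0_norm ?invr_gt0//.
by rewrite ltr_pdivrMl.
Qed.

Lemma interior_coneD y k : interior K y -> K k -> interior K (y + k).
Proof.
move=> /interior_normP[e e0 he] Kk; apply/interior_normP; exists e => // w hw.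
rewrite -(subrK k w); apply: coneD => //; apply: he.
by rewrite opprB addrA.
Qed.

Lemma interior_cone_ray y d (t : R) :
  interior K y -> K d -> 0 <= t -> interior K (y + t *: d).
Proof. by move=> yK dK t0; apply: interior_coneD => //; exact: coneZ. Qed.

Lemma scaler_segment (s d : 'cV[R]_m) (t t' : R) : t' != 0 ->
  s - t *: d = (1 - t / t') *: s + (t / t') *: (s - t' *: d).
Proof.
by move=> t'0; rewrite scalerBr scalerA divfK// scalerBl scale1r addrA subrK.
Qed.

Lemma cone_segment s d (t t' : R) :
  K s -> K (s - t' *: d) -> 0 <= t <= t' -> K (s - t *: d).
Proof.
move=> Ks Kt' /andP[t0 tt']; have [t'0|t'n0] := eqVneq t' 0.
  have -> : t = 0 by apply/le_anti; rewrite t0 -t'0 tt'.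
  by rewrite scale0r subr0.
have t'p : 0 < t' by rewrite lt_def t'n0 (le_trans t0).
rewrite (scaler_segment _ _ _ t'n0); apply: coneD; apply: coneZ => //.
- by rewrite subr_ge0 ler_pdivrMr ?mul1r.
- by rewrite divr_ge0 // ltW.
Qed.

Lemma interior_cone_segment s d (t t' : R) :
  interior K s -> K (s - t' *: d) -> 0 <= t < t' -> interior K (s - t *: d).
Proof.
move=> Ks Kt' /andP[t0 tt']; have t'p : 0 < t' := le_lt_trans t0 tt'.
rewrite (scaler_segment _ _ _ (lt0r_neq0 t'p)).
apply: interior_coneD; last by apply: coneZ => //; rewrite divr_ge0// ltW.
by apply: interior_coneZ => //; rewrite subr_gt0 ltr_pdivrMr ?mul1r.
Qed.

Lemma continuous_ray (s d : 'cV[R]_m) : continuous (fun t : R => s - t *: d).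
Proof.
by move=> t; apply: cvgB; [exact: cvg_cst | exact: scalel_continuous].
Qed.

Hypothesis Kp : pointed_cone K.

Lemma pointed_cone_ray_bounded s d : K s -> K d -> d != 0 ->
  has_ubound [set t : R | 0 <= t /\ K (s - t *: d)].
Proof.
move=> Ks Kd d0; apply: contrapT => unbounded.
have Kn (n : nat) : K (s - n%:R *: d).
  apply: contrapT => Kn; apply: unbounded; exists n%:R => t [t0 Kt].
  rewrite leNgt; apply/negP => nt; apply: Kn.
  by apply: (cone_segment Ks Kt); rewrite ler0n ltW.
suff Knd : K (- d) by move: d0; rewrite (Kp Kd Knd) eqxx.
(* [harmonic n *: s - d = (s - (n+1) d) / (n+1)] lies in [K] and tends to [-d]. *)
apply: (@closed_cvg nat _ \oo _ (fun n => harmonic n *: s - d) K cone_closed).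
  near=> n; rewrite /harmonic -[X in _ - X](scalerK (lt0r_neq0 (ltr0Sn R n))).
  by rewrite -scalerBr; apply: coneZ; rewrite ?invr_ge0.
rewrite -[X in _ --> X]add0r; apply: cvgB; last exact: cvg_cst.
by rewrite -(scale0r s); apply: cvgZ; [exact: cvg_harmonic | exact: cvg_cst].
Unshelve. all: by end_near.
Qed.

Lemma cone_exit_time s d : interior K s -> K d -> d != 0 ->
  exists2 T : R, 0 < T &
    [/\ forall t, 0 <= t < T -> interior K (s - t *: d),
        K (s - T *: d) & ~ interior K (s - T *: d)].
Proof.
move=> sK Kd d0; have Ks := interior_subset sK.
set A := [set t : R | 0 <= t /\ K (s - t *: d)].
have A0 : A 0 by split => //; rewrite scale0r subr0.
have A_bounded := pointed_cone_ray_bounded Ks Kd d0.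
have supA : has_sup A by split => //; exists 0.
have A_closed : closed A.
  apply: closedI; first exact: closed_ge.
  by apply: preimage_closed => [t _|]; [exact: continuous_ray | exact: cone_closed].
set T := sup A.
have [T0 KT] : A T by apply: A_closed; apply: closure_sup => //; exists 0.
have before_T t : 0 <= t < T -> interior K (s - t *: d).
  move=> /andP[t0 tT]; have Tt : 0 < T - t by rewrite subr_gt0.
  have [t' [_ Kt'] tt'] := sup_adherent Tt supA.
  apply: (interior_cone_segment sK Kt'); rewrite t0 /=.
  by move: tt'; rewrite -/T opprB addrCA subrr addr0.
have not_int_T : ~ interior K (s - T *: d).
  move=> /continuous_ray /(@nbhs_normP R R^o) [e e0 he].
  have : A (T + e / 2).
    split; first by rewrite addr_ge0 // divr_ge0 // ltW.
    apply: he; rewrite /= opprD addNKr normrN gtr0_norm ?divr_gt0 //.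
    by rewrite ltr_pdivrMr // ltr_pMr // ltr1n.
  by move/(sup_upper_bound supA); rewrite -/T gerDl leNgt divr_gt0.
exists T => //; rewrite lt_def T0 andbT; apply/eqP => T_eq0; apply: not_int_T.
by rewrite T_eq0 scale0r subr0.
Unshelve. all: by end_near.
Qed.

End ClosedConvexCone.

Lemma is_derive_unique (R : numFieldType) (V W : normedModType R) (g : V -> W)
    (a v : V) (dg dg' : W) :
  is_derive a v g dg -> is_derive a v g dg' -> dg = dg'.
Proof.
by move=> D D'; rewrite -(@derive_val _ _ _ _ _ _ _ D) (@derive_val _ _ _ _ _ _ _ D').
Qed.

Section DirectionalDerivative.
Variables (R : realType) (V : normedModType R).
Implicit Types (g : V -> R) (y d u v : V).

Lemma is_derive_line g y d (t : R) : derivable g (y + t *: d) d ->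
  is_derive t 1 (fun t : R => g (y + t *: d)) (derive g (y + t *: d) d).
Proof.
have quotE : (fun h : R => h^-1 *: ((fun t => g (y + t *: d)) (h *: 1 + t) - g (y + t *: d)))
    = (fun h : R => h^-1 *: (g (h *: d + (y + t *: d)) - g (y + t *: d))).
  by apply/funext => h; rewrite [h *: 1]mulr1 scalerDl addrCA addrA.
by move=> dg; split; rewrite /derivable /derive /= quotE.
Qed.

Lemma derive_dirD g y u v : differentiable g y ->
  derive g y (u + v) = derive g y u + derive g y v.
Proof. by move=> dg; rewrite !deriveE// linearD. Qed.

Lemma derive_dirZ g y (c : R) u : differentiable g y ->
  derive g y (c *: u) = c * derive g y u.
Proof. by move=> dg; rewrite !deriveE// linearZ. Qed.

End DirectionalDerivative.

Section MatrixNorm.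
Variable R : realType.

Lemma mx_entry_le_norm (p q : nat) (A : 'M[R]_(p, q)) i j : `|A i j| <= `|A|.
Proof. by rewrite [`|A|]mx_normrE; exact: (le_bigmax _ (fun ij => `|A ij.1 ij.2|) (i, j)). Qed.

Lemma mx_norm_trmx (p q : nat) (A : 'M[R]_(p, q)) : `|A^T| = `|A|.
Proof.
have le_tr (p' q' : nat) (B : 'M[R]_(p', q')) : `|B^T| <= `|B|.
  rewrite [`|B^T|]mx_normrE; apply/bigmax_leP; split => //= -[i j] _.
  by rewrite mxE mx_entry_le_norm.
by apply/eqP; rewrite eq_le le_tr -{1}(trmxK A) le_tr.
Qed.

Lemma trmx_continuous (p q : nat) : continuous (@trmx R p q).
Proof.
move=> A; apply/(@cvgrPdist_lt _ _ _ _ (nbhs_filter A)) => e e0.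
apply/(@nbhs_normP R 'M[R]_(p, q)); exists e => // B.
by rewrite /= -linearB mx_norm_trmx.
Qed.

End MatrixNorm.

Section DotProduct.
Variables (R : realType) (m : nat).
Implicit Types (u v w : 'cV[R]_m).

Lemma dotDr u v w : dot u (v + w) = dot u v + dot u w.
Proof. by rewrite /dot -big_split; apply: eq_bigr => i _; rewrite mxE mulrDr. Qed.

Lemma dotZr u (c : R) v : dot u (c *: v) = c * dot u v.
Proof. by rewrite /dot mulr_sumr; apply: eq_bigr => i _; rewrite mxE mulrCA. Qed.

Lemma dot0l v : dot 0 v = 0.
Proof. by rewrite /dot big1 // => i _; rewrite mxE mul0r. Qed.

Lemma dotC u v : dot u v = dot v u.
Proof. by apply: eq_bigr => i _; rewrite mulrC. Qed.

Lemma dotZl (c : R) u v : dot (c *: u) v = c * dot u v.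
Proof. by rewrite dotC dotZr dotC. Qed.

Lemma dot_unitv_line v (t : R) i :
  dot (v + t *: unitv R i) (v + t *: unitv R i) = dot v v + (2 * t * v i 0 + t ^+ 2).
Proof.
rewrite /dot (bigD1 i) // [in RHS](bigD1 i) //= addrAC; congr (_ + _).
  by rewrite !mxE eqxx mulr1; ring.
by apply: eq_bigr => j /negPf ji; rewrite !mxE ji mulr0 addr0.
Qed.

Lemma norm_dot_le u v : `|dot u v| <= m%:R * (`|u| * `|v|).
Proof.
have -> : m%:R * (`|u| * `|v|) = \sum_(i < m) `|u| * `|v|.
  by rewrite sumr_const card_ord mulr_natl.
apply: le_trans (ler_norm_sum _ _ _) _.
by apply: ler_sum => i _; rewrite normrM ler_pM ?mx_entry_le_norm.
Qed.

Lemma continuous_dotl (z : 'cV[R]_m) : continuous (fun u : 'cV[R]_m => dot u z).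
Proof.
rewrite /dot; apply: continuous_big => [|i _ u]; first exact: add_continuous.
by apply: cvgMr_tmp; [exact: nbhs_filter | exact: coord_continuous].
Qed.

Lemma dot_grad (g : 'cV[R]_m -> R) s d : differentiable g s ->
  dot d (grad g s) = derive g s d.
Proof.
move=> dg; have {2}-> : d = \sum_(i < m) d i 0 *: unitv R i.
  apply/matrixP => i j; rewrite (ord1 j) summxE (bigD1 i) //= big1 ?addr0.
    by rewrite !mxE !eqxx mulr1.
  by move=> k /negPf ki; rewrite !mxE eq_sym ki mulr0.
rewrite deriveE // linear_sum /dot; apply: eq_bigr => i _.
by rewrite linearZ /= -deriveE // mxE.
Qed.

End DotProduct.

Section RealCalculus.
Variable R : realType.
Implicit Types (phi dphi ddphi : R -> R) (a b : R).

Lemma is_derive_ge0_le phi dphi a b : a <= b ->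
  {in `[a, b], forall x : R, is_derive x 1 phi (dphi x)} ->
  {in `]a, b[, forall x, 0 <= dphi x} -> phi a <= phi b.
Proof.
move=> ab dphiP dphi_ge0.
have oc x : x \in `]a, b[ -> x \in `[a, b] by exact: subset_itv_oo_cc.
apply: (@ger0_derive1_le_cc R phi a b) => //.
- by move=> x /oc/dphiP [].
- by move=> x xab; rewrite derive1E (@derive_val _ _ _ _ _ _ _ (dphiP x (oc x xab))) dphi_ge0.
- by apply: derivable_within_continuous => x /dphiP [].
- by rewrite in_itv /= lexx ab.
- by rewrite in_itv /= lexx ab.
Qed.

Lemma is_derive_eq0_eq phi dphi a b : a <= b ->
  {in `[a, b], forall x : R, is_derive x 1 phi (dphi x)} ->
  {in `]a, b[, forall x, dphi x = 0} -> phi a = phi b.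
Proof.
move=> ab dphiP dphi0; apply/eqP; rewrite eq_le (is_derive_ge0_le ab dphiP) /=.
  rewrite -lerN2; apply: (@is_derive_ge0_le (fun x => - phi x) (fun x => - dphi x)) => //.
    by move=> x /dphiP; exact: is_deriveN.
  by move=> x /dphi0 ->; rewrite oppr0.
by move=> x /dphi0 ->.
Qed.

Lemma is_derive2_ge0_tangent_le phi dphi ddphi a b : a <= b ->
  {in `[a, b], forall x : R, is_derive x 1 phi (dphi x)} ->
  {in `[a, b], forall x : R, is_derive x 1 dphi (ddphi x)} ->
  {in `]a, b[, forall x, 0 <= ddphi x} ->
  dphi a * (b - a) <= phi b - phi a.
Proof.
move=> ab dphiP ddphiP ddphi_ge0.
have [c cab ->] := MVT_segment ab (fun x xab => dphiP x (subset_itv_oo_cc xab))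
  (derivable_within_continuous (fun x xab => @ex_derive _ _ _ _ _ _ _ (dphiP x xab))).
rewrite ler_wpM2r ?subr_ge0//; move: cab; rewrite in_itv /= => /andP[ac cb].
apply: (is_derive_ge0_le ac) => x; rewrite in_itv /= => /andP[ax xc].
  by apply: ddphiP; rewrite in_itv /= ax (le_trans xc).
by apply: ddphi_ge0; rewrite in_itv /= ax (lt_le_trans xc).
Qed.

Lemma is_derive_expRM (L x : R) :
  is_derive x 1 (fun y => expR (L * y)) (expR (L * x) * L).
Proof.
have dLx : is_derive x 1 ( *%R L) L.
  by apply: (is_derive_eq (is_deriveZ L (is_derive_id x 1))); rewrite /GRing.scale /= mulr1.
exact: (is_derive1_comp (is_derive_expR _) dLx).
Qed.

(* With [M] the maximum of [phi] on [a, b], the hypothesis gives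
   [|phi'| <= 2 sqrt M phi], so [phi x * exp (2 sqrt M x)] is nondecreasing;
   it vanishes at [b]. *)
Lemma derive_le_pow32_vanish phi dphi a b : a <= b ->
  {in `[a, b], forall x : R, is_derive x 1 phi (dphi x)} ->
  {in `[a, b], forall x, 0 <= phi x} ->
  {in `[a, b], forall x, `|dphi x| <= 2 * phi x `^ (3%:R / 2%:R)} ->
  phi b = 0 -> {in `[a, b], forall x, phi x = 0}.
Proof.
move=> ab dphiP phi_ge0 dphi_le phib x xab.
have [c cab phi_max] := EVT_max ab
  (derivable_within_continuous (fun x xab => @ex_derive _ _ _ _ _ _ _ (dphiP x xab))).
pose L := 2 * phi c `^ 2^-1.
have linear_bound y : y \in `[a, b] -> 0 <= dphi y + L * phi y.
  move=> yab; have phiy0 := phi_ge0 y yab.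
  have pow32 : phi y `^ (3%:R / 2%:R) = phi y * phi y `^ 2^-1.
    rewrite (_ : 3%:R / 2%:R = 1 + 2^-1); last by field.
    by rewrite powRD ?powRr1// implybE gt_eqF// addr_gt0// invr_gt0.
  have sqrt_le : phi y `^ 2^-1 <= phi c `^ 2^-1.
    by apply: ge0_ler_powR; rewrite ?invr_ge0 ?nnegrE ?phi_ge0 ?phi_max.
  have : - dphi y <= L * phi y.
    apply: le_trans (ler_norm _) _; rewrite normrN (le_trans (dphi_le y yab))// pow32.
    by rewrite /L -mulrA ler_wpM2l// mulrC ler_wpM2r.
  lra.
pose g y := phi y * expR (L * y).
have xb : x <= b by move: xab; rewrite in_itv /= => /andP[].
have sub_xb y : y \in `[x, b] -> y \in `[a, b].
  by move: xab; rewrite !in_itv /= => /andP[ax _] /andP[xy ->]; rewrite (le_trans ax xy).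
have : g x <= g b.
  apply: (@is_derive_ge0_le g (fun y => expR (L * y) * (dphi y + L * phi y))) => // y yxb.
    apply: is_derive_eq.
      exact: is_deriveM (dphiP y (sub_xb y yxb)) (is_derive_expRM L y).
    by rewrite /GRing.scale /=; ring.
  by rewrite mulr_ge0 ?expR_ge0 ?linear_bound ?sub_xb ?subset_itv_oo_cc.
rewrite /g phib mul0r pmulr_lle0 ?expR_gt0// => phix_le0.
by apply/eqP; rewrite eq_le phix_le0 phi_ge0.
Qed.

End RealCalculus.

Section Barrier.
Variables (R : realType) (m : nat) (K : set 'cV[R]_m) (f : 'cV[R]_m -> R) (nu : R).
Hypotheses (Kc : closed_convex_cone K) (Hf : LHSCB K f nu).
Implicit Types (s y d r : 'cV[R]_m).

Lemma LHSCB_nu_gt0 : 0 < nu.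
Proof. by case: Hf. Qed.

Lemma LHSCB_homogeneous s (t : R) :
  interior K s -> 0 < t -> f (t *: s) = f s - nu * ln t.
Proof. by case: Hf => _ _; apply. Qed.

Lemma LHSCB_differentiable s : interior K s -> differentiable f s.
Proof. by case: Hf => _ [+ _ _] _ => /[apply] -[]. Qed.

Lemma LHSCB_D2_ge0 s r : interior K s -> 0 <= D2 f s r.
Proof. by case: Hf => _ [_ _ +] _ => /[apply] /(_ r) []. Qed.

Lemma LHSCB_D3_le s r : interior K s -> `|D3 f s r| <= 2 * D2 f s r `^ (3%:R / 2%:R).
Proof. by case: Hf => _ [_ _ +] _ => /[apply] /(_ r) []. Qed.

Lemma is_derive_barrier_line s d (t : R) : interior K (s + t *: d) ->
  is_derive t 1 (fun t : R => f (s + t *: d)) (derive f (s + t *: d) d).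
Proof.
by move=> /LHSCB_differentiable /diff_derivable dfs; apply: is_derive_line.
Qed.

Lemma is_derive_barrier_line1 s d (t : R) : interior K (s + t *: d) ->
  is_derive t 1 (fun t : R => derive f (s + t *: d) d) (D2 f (s + t *: d) d).
Proof.
move=> stK; have dg : differentiable (fun y => derive f y d) (s + t *: d).
  by case: Hf => _ [/(_ _ stK) [] _ + _] _.
rewrite /D2; apply: is_derive_line; exact: diff_derivable.
Qed.

Lemma is_derive_barrier_line2 s d (t : R) : interior K (s + t *: d) ->
  is_derive t 1 (fun t : R => D2 f (s + t *: d) d) (D3 f (s + t *: d) d).
Proof.
move=> stK; have dg : differentiable (fun y => D2 f y d) (s + t *: d).
  by case: Hf => _ [/(_ _ stK) [] _ _ +] _ => /(_ d d).
exact: (is_derive_line (diff_derivable dg)).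
Qed.

Lemma derive_barrier_self s : interior K s -> derive f s s = - nu.
Proof.
move=> sK.
have line : is_derive (1 : R) 1 (fun t : R => f (0 + t *: s)) (derive f s s).
  by have := @is_derive_barrier_line 0 s 1; rewrite add0r scale1r; apply.
have hom : is_derive (1 : R) 1 (fun t : R => f (0 + t *: s)) (0 - nu *: 1^-1).
  apply: near_eq_is_derive (is_deriveB _ (is_deriveZ nu (is_derive1_ln _))) => //.
  near=> t; have t0 : 0 < t by near: t; exact: lt_nbhsr.
  by rewrite add0r LHSCB_homogeneous.
by rewrite (is_derive_unique line hom) invr1 sub0r /GRing.scale /= mulr1.
Unshelve. all: by end_near.
Qed.

(* By homogeneity [f (y + t d) = f (d + y / t) - nu ln t], and [d + y / t -> d]. *)
Lemma barrier_ray_bounded y d : interior K y -> interior K d ->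
  \forall t \near +oo, f (y + t *: d) <= f d + 1.
Proof.
move=> yK dK.
have /(@nbhs_normP R 'cV[R]_m) [e e0 f_near_d] : \forall w \near d, f w < f d + 1.
  have := differentiable_continuous (LHSCB_differentiable dK).
  move=> /cvgrPdist_lt /(_ 1 ltr01); apply: filterS => w.
  by rewrite distrC => /(le_lt_trans (ler_norm _)); lra.
near=> t; have t_ge1 : 1 <= t by near: t; apply: nbhs_pinfty_ge; exact: num_real.
have t0 : 0 < t := lt_le_trans ltr01 t_ge1.
have -> : y + t *: d = t *: (d + t^-1 *: y).
  by rewrite scalerDr scalerA divff ?gt_eqF // scale1r addrC.
have dyK : interior K (d + t^-1 *: y).
  apply: (interior_coneD Kc dK); apply: (coneZ Kc); last exact: interior_subset.
  by rewrite invr_ge0 ltW.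
rewrite (LHSCB_homogeneous dyK t0).
have : f (d + t^-1 *: y) < f d + 1.
  apply: f_near_d; rewrite /= opprD addNKr normrN normrZ gtr0_norm ?invr_gt0 //.
  rewrite ltr_pdivrMl // -ltr_pdivrMr //; near: t; apply: nbhs_pinfty_gt; exact: num_real.
have : 0 <= nu * ln t by rewrite mulr_ge0 ?ln_ge0 // ltW // LHSCB_nu_gt0.
lra.
Unshelve. all: by end_near.
Qed.

Lemma derive_barrier_interior_le0 y d : interior K y -> interior K d ->
  derive f y d <= 0.
Proof.
move=> yK dK; rewrite leNgt; apply/negP => D0.
have tangent t : 0 <= t -> derive f y d * t <= f (y + t *: d) - f y.
  move=> t0; have ray_int := interior_cone_ray Kc yK (interior_subset dK).
  have := @is_derive2_ge0_tangent_le R (fun t => f (y + t *: d))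
    (fun t => derive f (y + t *: d) d) (fun t => D2 f (y + t *: d) d) 0 t t0.
  rewrite scale0r addr0 subr0; apply => x; rewrite in_itv /= => /andP[x0 _].
  - by apply: is_derive_barrier_line; exact: ray_int.
  - by apply: is_derive_barrier_line1; exact: ray_int.
  - by apply: LHSCB_D2_ge0; apply: ray_int; exact: ltW.
have [t [t0 ft big]] : exists t, [/\ 0 <= t, f (y + t *: d) <= f d + 1
    & (f d + 1 - f y) / derive f y d < t].
  apply: (@filter_ex _ (pinfty_nbhs R)); near=> t; split; near: t.
  - by apply: nbhs_pinfty_ge; exact: num_real.
  - exact: barrier_ray_bounded.
  - by apply: nbhs_pinfty_gt; exact: num_real.
have := tangent t t0; move: big; rewrite ltr_pdivrMr // mulrC; lra.
Unshelve. all: by end_near.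
Qed.

(* Perturb [d] into [d + e y], an interior direction, and use [D f(y)[y] = - nu]. *)
Lemma derive_barrier_le0 y d : interior K y -> K d -> derive f y d <= 0.
Proof.
move=> yK dK; have nu0 := LHSCB_nu_gt0; rewrite leNgt; apply/negP => D0.
pose e := derive f y d / (2 * nu).
have e0 : 0 < e by rewrite divr_gt0 // mulr_gt0.
have := derive_barrier_interior_le0 yK (interior_coneD Kc (interior_coneZ Kc e0 yK) dK).
have dfy := LHSCB_differentiable yK.
rewrite addrC (derive_dirD _ _ dfy) (derive_dirZ _ _ dfy) (derive_barrier_self yK).
have -> : e * - nu = - (derive f y d / 2) by rewrite /e; field; rewrite gt_eqF.
lra.
Qed.

End Barrier.

Section BarrierStrict.
Variables (R : realType) (m : nat) (K : set 'cV[R]_m) (f : 'cV[R]_m -> R) (nu : R).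
Hypotheses (Kc : closed_convex_cone K) (Kp : pointed_cone K) (Hf : LHSCB K f nu).
Implicit Types (s d : 'cV[R]_m).

(* Self-concordance propagates [D2 f(s + x d)[d] = 0] from [x = 1] to the whole
   segment, so [D f(s + x d)[d]] vanishes on it as well. *)
Lemma barrier_flat_segment s d (a : R) : a <= 0 ->
  (forall x, a <= x <= 1 -> interior K (s + x *: d)) ->
  derive f (s + d) d = 0 -> D2 f (s + d) d = 0 -> f (s + a *: d) = f s.
Proof.
move=> a0 seg Df1 D2f1; have a1 : a <= 1 := le_trans a0 ler01.
rewrite -[X in s + X](scale1r d) in Df1 D2f1.
have segI x : x \in `[a, 1] -> interior K (s + x *: d) by rewrite in_itv => /seg.
have oc x y z : x \in `]y, z[ -> x \in `[y, z] by exact: subset_itv_oo_cc.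
have sub_x1 x : x \in `[a, 1] -> {subset `[x, 1] <= `[a, 1]}.
  by rewrite in_itv /= => /andP[ax _]; apply: subitvP; rewrite subitvE !bnd_simp ?ax ?lexx.
have sub_a0 : {subset `[a, 0] <= `[a, 1]}.
  by apply: subitvP; rewrite subitvE !bnd_simp ?lexx ?ler01.
have D2_0 : {in `[a, 1], forall x : R, D2 f (s + x *: d) d = 0}.
  apply: (@derive_le_pow32_vanish _ _ (fun x => D3 f (s + x *: d) d) _ _ a1).
  - by move=> x /segI; apply: (is_derive_barrier_line2 Hf).
  - by move=> x /segI; apply: (LHSCB_D2_ge0 Hf).
  - by move=> x /segI; apply: (LHSCB_D3_le Hf).
  - exact: D2f1.
have Df_0 : {in `[a, 1], forall x : R, derive f (s + x *: d) d = 0}.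
  move=> x xI; have x1 : x <= 1 by move: xI; rewrite in_itv => /andP[].
  rewrite -Df1; apply: (@is_derive_eq0_eq _ (fun t => derive f (s + t *: d) d)
    (fun t => D2 f (s + t *: d) d) _ _ x1) => y yI.
    by apply: (is_derive_barrier_line1 Hf); apply/segI/(sub_x1 x).
  by apply/D2_0/(sub_x1 x)/oc.
rewrite -[in RHS](addr0 s) -(scale0r d).
apply: (@is_derive_eq0_eq _ (fun t => f (s + t *: d))
  (fun t => derive f (s + t *: d) d) _ _ a0) => y yI.
  by apply: (is_derive_barrier_line Hf); apply/segI/sub_a0.
by apply/Df_0/sub_a0/oc.
Qed.

Lemma barrier_unbounded_at_exit s d (T M : R) : 0 < T ->
  (forall t, 0 <= t < T -> interior K (s - t *: d)) ->
  K (s - T *: d) -> ~ interior K (s - T *: d) ->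
  exists2 t, 0 <= t < T & M < f (s - t *: d).
Proof.
move=> T0 before_T KT not_int_T.
pose t_ k := T - T * harmonic k.
have t_I k : 0 <= t_ k < T.
  have hk1 : harmonic k <= 1 :> R by rewrite /harmonic /= invf_le1 ?ler1n ?ltr0n.
  by rewrite /t_ subr_ge0 (ger_pMr _ T0) hk1 ltrBlDr ltrDl mulr_gt0 ?harmonic_gt0.
have t_cvg : t_ @ \oo --> T.
  rewrite -[X in _ --> X]subr0 -(mulr0 T); apply: cvgB; first exact: cvg_cst.
  by apply: cvgMl_tmp; exact: cvg_harmonic.
have cvg_exit : (fun k => s - t_ k *: d) @ \oo --> s - T *: d.
  by apply: cvgB; [exact: cvg_cst | apply: cvgZ; [exact: t_cvg | exact: cvg_cst]].
case: Hf => _ [_ blowup _] _.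
have /cvgryPge /(_ (M + 1)) [N _ /(_ N (leqnn N)) /= fN] :=
  blowup _ _ (fun k => before_T _ (t_I k)) cvg_exit KT not_int_T.
by exists (t_ N) => //; lra.
Qed.

Lemma derive_barrier_lt0 s d : interior K s -> K d -> d != 0 -> derive f s d < 0.
Proof.
move=> sK Kd d0; rewrite lt_def (derive_barrier_le0 Kc Hf sK Kd) andbT.
apply/eqP => /esym Df0.
have ray t : 0 <= t -> interior K (s + t *: d) by exact: interior_cone_ray.
(* [t |-> D f(s + t d)[d]] is nondecreasing, nonpositive and vanishes at [0]. *)
have Df_ray t : 0 <= t -> derive f (s + t *: d) d = 0.
  move=> t0; apply/eqP; rewrite eq_le (derive_barrier_le0 Kc Hf (ray t t0) Kd) /=.
  have := @is_derive_ge0_le _ (fun t => derive f (s + t *: d) d)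
    (fun t => D2 f (s + t *: d) d) 0 t t0.
  rewrite scale0r addr0 Df0; apply => x; rewrite in_itv /= => /andP[x0 _].
    by apply: (is_derive_barrier_line1 Hf); exact: ray.
  by apply: (LHSCB_D2_ge0 Hf); apply: ray; exact: ltW.
have D2_1 : D2 f (s + d) d = 0.
  have D1 := is_derive_barrier_line1 Hf (ray 1 ler01); rewrite scale1r in D1.
  apply: is_derive_unique D1 _; apply: near_eq_is_derive (is_derive_cst 0 _ _).
  near=> t; rewrite Df_ray //; apply: ltW; near: t; exact: lt_nbhsr.
have [T T0 [before_T KT not_int_T]] := cone_exit_time Kc Kp sK Kd d0.
have [t tI] := barrier_unbounded_at_exit (f s) T0 before_T KT not_int_T.
suff -> : f (s - t *: d) = f s by rewrite ltxx.
rewrite -scaleNr; apply: barrier_flat_segment.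
- by move: tI; rewrite oppr_le0 => /andP[].
- move=> x /andP[tx x1]; have [x0|x0] := leP 0 x; first exact: ray.
  rewrite -[x]opprK scaleNr; apply: before_T; rewrite oppr_ge0 ltW //=.
  by move: tI => /andP[_]; apply: le_lt_trans; rewrite lerNl.
- by have := Df_ray 1 ler01; rewrite scale1r.
- exact: D2_1.
Unshelve. all: by end_near.
Qed.

End BarrierStrict.

Section DualConeInterior.
Variables (R : realType) (m : nat).

(* [eps] is the minimum of [<d, z>] over the unit vectors [d] of [K], a compact set;
   it is taken among row vectors, where closed bounded sets are known to be compact. *)
Lemma cone_dot_coercive (K : set 'cV[R]_m) z : closed_convex_cone K ->
  (forall d, K d -> d != 0 -> 0 < dot d z) ->
  exists2 eps : R, 0 < eps & forall d, K d -> eps * `|d| <= dot d z.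
Proof.
move=> Kc z_pos.
pose S : set 'rV[R]_m := [set r | K r^T /\ `|r| = 1].
pose F := (fun u : 'cV[R]_m => dot u z) \o @trmx R 1 m.
have unit_dir d : K d -> d != 0 -> S (`|d|^-1 *: d)^T.
  move=> Kd d0; rewrite /S /= trmxK mx_norm_trmx normrZ normfV normr_id.
  by rewrite mulVf ?normr_eq0 //; split => //; apply: coneZ; rewrite ?invr_ge0.
have [Sne|S0] := pselect (S !=set0); last first.
  exists 1 => // d Kd; have [->|d0] := eqVneq d 0; first by rewrite normr0 mulr0 dot0l.
  by exfalso; apply: S0; exists (`|d|^-1 *: d)^T; exact: unit_dir.
have S_compact : compact S.
  apply: bounded_closed_compact; first by exists 1; split => // x x1 r [_ /= ->]; exact: ltW.
  have -> : S = @trmx R 1 m @^-1` K `&` Num.norm @^-1` [set 1] by [].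
  apply: closedI; apply: preimage_closed.
  - by move=> r _; exact: trmx_continuous.
  - exact: cone_closed.
  - by move=> r _; exact: norm_continuous.
  - exact: closed_eq.
have F_cont : continuous F.
  by move=> r; apply: continuous_comp; [exact: trmx_continuous | exact: continuous_dotl].
have [c /set_mem[Kc1 c1] c_min] := compact_EVT_min Sne S_compact (continuous_subspaceT F_cont).
have c0 : c^T != 0.
  by apply: contra_eqN c1 => /eqP c0; rewrite -mx_norm_trmx c0 normr0 eq_sym oner_eq0.
exists (F c); first exact: z_pos.
move=> d Kd; have [->|d0] := eqVneq d 0.
  by rewrite normr0 mulr0 /F /= dot0l.
have d_pos : 0 < `|d| by rewrite normr_gt0.
have := c_min _ (mem_set (unit_dir d Kd d0)).
by rewrite /F /= trmxK dotZl -(ler_pM2r d_pos) mulrAC mulVf ?gt_eqF // mul1r.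
Qed.

Lemma interior_dual_cone (K : set 'cV[R]_m) z (eps : R) : 0 < eps ->
  (forall d, K d -> eps * `|d| <= dot d z) -> interior (dual_cone K) z.
Proof.
move=> eps0 z_coercive; have m1 : 0 < m%:R + 1 :> R by rewrite ltr_wpDl.
apply/(@nbhs_normP R 'cV[R]_m); exists (eps / (m%:R + 1)); first exact: divr_gt0.
move=> w /= zw d Kd; rewrite -(subrKC z w) dotDr.
have small : m%:R * `|w - z| <= eps.
  rewrite distrC in zw; have X0 := normr_ge0 (w - z).
  have : (m%:R + 1) * `|w - z| <= eps.
    by rewrite mulrC -ler_pdivlMr // ltW.
  rewrite mulrDl mul1r; lra.
have := norm_dot_le d (w - z); rewrite ler_norml => /andP[dwz _].
have : m%:R * (`|d| * `|w - z|) <= eps * `|d|.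
  by rewrite mulrCA [eps * _]mulrC ler_wpM2l.
have := z_coercive d Kd; lra.
Qed.

End DualConeInterior.

Section CentralPath.
Variables (R : realType) (m : nat) (K : set 'cV[R]_m) (f : 'cV[R]_m -> R) (nu : R).
Hypotheses (Kc : closed_convex_cone K) (Hf : LHSCB K f nu).
Implicit Types (s c : 'cV[R]_m).

Lemma interior_dual_cone_neg_grad s (mu : R) : pointed_cone K ->
  interior K s -> 0 < mu -> interior (dual_cone K) (- (mu *: grad f s)).
Proof.
move=> Kp sK mu0; have [eps eps0 coercive] : exists2 eps : R, 0 < eps &
    forall d, K d -> eps * `|d| <= dot d (- (mu *: grad f s)).
  apply: (cone_dot_coercive Kc) => d Kd d0.
  rewrite -scaleNr dotZr (dot_grad _ (LHSCB_differentiable Hf sK)) mulNr -mulrN.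
  by rewrite mulr_gt0 // oppr_gt0 (derive_barrier_lt0 Kc Kp Hf).
exact: interior_dual_cone eps0 coercive.
Qed.

Lemma prox_obj_stationary c s (mu : R) : interior K s ->
  (forall y, interior K y -> prox_obj f mu c s <= prox_obj f mu c y) ->
  s - c + mu *: grad f s = 0.
Proof.
move=> sK s_min; apply/matrixP => i j; rewrite (ord1 j) !mxE.
set e := unitv R i; set v := s - c.
have [del del0 line_int] : exists2 del : R, 0 < del &
    forall t : R, `|t| < del -> interior K (s + t *: e).
  have line_cvg : (fun t : R => s + t *: e) @ 0 --> s.
    rewrite -[X in _ --> X]addr0 -(scale0r e).
    by apply: cvgD; [exact: cvg_cst | exact: scalel_continuous].
  have /(@nbhs_normP R R^o) [del del0 near0] := line_cvg _ (nbhs_interior sK).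
  by exists del => // t t_del; apply: near0; rewrite /= sub0r normrN.
pose phi t := prox_obj f mu c (s + t *: e).
have phi_derive (t : R) : `|t| < del ->
    is_derive t 1 phi (v i 0 + t + mu * derive f (s + t *: e) e).
  move=> t_del; have id_t := is_derive_id t (1 : R).
  have quad := is_deriveD (is_deriveD (is_derive_cst (2^-1 * dot v v) t 1)
    (is_deriveZ (v i 0) id_t)) (is_deriveZ 2^-1 (is_deriveM id_t id_t)).
  have line := is_deriveZ mu (is_derive_barrier_line Hf (line_int t t_del)).
  apply: is_derive_eq (near_eq_is_derive _ (is_deriveD quad line)) _.
    near=> x; rewrite /phi /prox_obj /e [s + _ - c]addrAC dot_unitv_line !fctE /cst /=.
    by rewrite /GRing.scale /=; field.
  by rewrite /GRing.scale /=; field.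
have phi_min : is_derive (0 : R) 1 phi 0.
  apply: (@derive1_at_min _ phi (- del) del).
  - lra.
  - move=> t; rewrite in_itv /= -ltr_norml => /phi_derive D.
    exact: @ex_derive _ _ _ _ _ _ _ D.
  - by rewrite in_itv /= oppr_lt0 del0.
  - move=> t; rewrite in_itv /= -ltr_norml => /line_int /s_min.
    by rewrite /phi scale0r addr0.
have := is_derive_unique (phi_derive 0 _) phi_min; rewrite normr0 => /(_ del0).
by rewrite addr0 scale0r addr0 /v !mxE.
Unshelve. all: by end_near.
Qed.

End CentralPath.

Theorem theorem1 (R : realType) (n m : nat)
    (P : 'M[R]_n) (A : 'M[R]_(m, n)) (q : 'cV[R]_n) (b : 'cV[R]_m)
    (K : set 'cV[R]_m) (f : 'cV[R]_m -> R) (nu : R)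
    (xstar : 'cV[R]_n) (sstar zstar : 'cV[R]_m) (mu0 lambda : R)
    (s0 : 'cV[R]_m) :
  P^T = P -> (forall x : 'cV[R]_n, 0 <= (x^T *m P *m x) 0 0) ->
  closed_convex_cone K -> pointed_cone K ->
  LHSCB K f nu ->
  0 < mu0 -> 0 < lambda ->
  (* s0 = S_{K,mu0}(c) with c = s* - lambda z* : the minimizer over int K *)
  interior K s0 ->
  (forall s, interior K s ->
     prox_obj f mu0 (sstar - lambda *: zstar) s0
       <= prox_obj f mu0 (sstar - lambda *: zstar) s) ->
  let c := sstar - lambda *: zstar in
  let z0 := lambda^-1 *: (s0 - c) in
  let x0 := xstar in
  let r0 := (lambda / mu0) *: resid P A q b x0 s0 z0 in
  let mu := mu0 / lambda in
  [/\ interior K s0, interior (dual_cone K) z0,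
      resid P A q b x0 s0 z0 = mu *: r0,
      z0 = - (mu *: grad f s0) &
      dot s0 z0 = nu * mu0 / lambda].
Proof.
move=> _ _ Kc Kp Hf mu0_gt0 lambda_gt0 s0K s0_min c z0 x0 r0 mu.
have mu_gt0 : 0 < mu by exact: divr_gt0.
have z0E : z0 = - (mu *: grad f s0).
  have /eqP := prox_obj_stationary Hf s0K s0_min; rewrite addr_eq0 => /eqP s0c.
  by rewrite /z0 -/c s0c scalerN scalerA mulrC.
split => //.
- by rewrite z0E; exact: (interior_dual_cone_neg_grad Kc Hf Kp s0K mu_gt0).
- by rewrite /r0 scalerA /mu mulrA divfK ?gt_eqF // divff ?gt_eqF // scale1r.
- rewrite z0E -scaleNr dotZr (dot_grad _ (LHSCB_differentiable Hf s0K)).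
  by rewrite (derive_barrier_self Hf s0K) mulrNN /mu mulrC mulrA.
Qed.
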